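(* Let $S_1,S_2$ be solids of $\mathrm{PG}(6,q)$ with $\dim(S_1\cap S_2)\le 1$ and let $P$ be a point not contained in $S_1\cup S_2$. Then the number of planes that contain $P$ and meet both $S_1$ and $S_2$ non-trivially is at most $2q^6+2q^5+3q^4+2q^3+2q^2+q+1$.
   Context: Dimensions are projective (planes 2, solids 3). *)

From HB Require Import structures.
From mathcomp Require Import all_boot all_algebra all_field.
Set Implicit Arguments. Unset Strict Implicit. Unset Printing Implicit Defensive.

(* PG(n-1,q) is modelled by the vector space 'rV[F]_n over a finite field F
   with #|F| = q; a projective subspace of projective dimension k is a vector
   subspace (an element of {vspace 'rV[F]_n}) of vector dimension k+1.
   So PG(6,q): n = 7; points: \dim = 1; planes: \dim = 3; solids: \dim = 4. *)

(* The type of all subspaces of F^n, with the finType structure transported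
   from square matrices through the canonical injection vs2mx (this is just
   {vspace 'rV[F]_n} with a finType instance). *)
Definition pgsub (F : finFieldType) (n : nat) :=
  can_type (@VectorInternalTheory.vs2mxK F 'rV[F]_n).

Definition planes_through_meeting (F : finFieldType)
  (P S1 S2 : {vspace 'rV[F]_7}) : {set pgsub F 7} :=
  [set pi : pgsub F 7 | [&& \dim pi == 3, (P <= pi)%VS,
      (pi :&: S1)%VS != 0%VS & (pi :&: S2)%VS != 0%VS]].

From HB Require Import structures.
From mathcomp Require Import all_boot all_algebra all_field.
From mathcomp Require Import zify.
Set Implicit Arguments. Unset Strict Implicit. Unset Printing Implicit Defensive.

(** Let T_i be the span of S_i and P, and J = T_1 ∩ T_2; since
   dim(S_1 ∩ S_2) <= 1, J is a plane or a solid through P.  A plane π through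
   P meeting S_1 and S_2 either lies in J, or meets J in a line ℓ through P
   (and is one of the planes on ℓ not in J), or meets J only in P.  In the
   last case π meets each S_i in a single point outside J, and π is spanned by
   P and these two points, so such planes inject into pairs of points of
   (S_1 \ J) × (S_2 \ J).  Counting each class with the q-integers
   [k]_q = 1 + q + ... + q^(k-1) gives exactly the bound when J is a solid
   and less when J is a plane. *)

Definition qint (q k : nat) := \sum_(i < k) q ^ i.

Lemma qint_gt0 q k : 0 < k -> 0 < qint q k.
Proof. by case: k => // k _; rewrite /qint big_ord_recl expn0 addSn. Qed.

Section FiberCounting.
Variables (T U : finType) (A : {set T}) (B : {set U}).

Lemma card_fibers_sum (f : T -> U) : {in A, forall x, f x \in B} ->
  #|A| = \sum_(y in B) #|[set x in A | f x == y]|.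
Proof.
move=> fAB; rewrite -sum1_card (partition_big f (mem B)) //=.
by apply: eq_bigr => y _; rewrite -sum1_card; apply: eq_bigl => x; rewrite !inE.
Qed.

Lemma card_fibers_eq (f : T -> U) k : {in A, forall x, f x \in B} ->
  {in B, forall y, #|[set x in A | f x == y]| = k} -> #|A| = #|B| * k.
Proof.
by move=> fAB fibk; rewrite (card_fibers_sum fAB) (eq_bigr _ fibk) sum_nat_const.
Qed.

Lemma card_fibers_le (f : T -> U) k : {in A, forall x, f x \in B} ->
  {in B, forall y, #|[set x in A | f x == y]| <= k} -> #|A| <= #|B| * k.
Proof.
by move=> fAB fibk; rewrite (card_fibers_sum fAB) -sum_nat_const leq_sum.
Qed.

Lemma sum_card_rel (R : T -> U -> bool) :
  \sum_(x in A) #|[set y in B | R x y]| = \sum_(y in B) #|[set x in A | R x y]|.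
Proof.
have card_sep (I : finType) (C : {set I}) (p : pred I) :
    #|[set i in C | p i]| = \sum_(i in C) p i.
  rewrite -sum1_card (eq_bigl (fun i => (i \in C) && p i)) => [|i]; last first.
    by rewrite inE.
  by rewrite big_mkcondr; apply: eq_bigr => i _; case: (p i).
under eq_bigr do rewrite card_sep.
under [RHS]eq_bigr do rewrite card_sep.
exact: exchange_big.
Qed.
End FiberCounting.

Section Subspaces.
Variables (F : finFieldType) (n : nat).
Local Notation V := {vspace 'rV[F]_n}.
Local Notation q := #|F|.

Definition subspaces_between (m W : V) k : {set pgsub F n} :=
  [set U : pgsub F n | [&& \dim U == \dim m + k, (m <= U)%VS & (U <= W)%VS]].

Lemma capv_point_eq0 (U x : V) : \dim x = 1 -> ~~ (x <= U)%VS -> (U :&: x = 0)%VS.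
Proof.
move=> dx xU; apply/eqP; rewrite -dimv_eq0; apply: contraNT xU => Ux_neq0.
have /eqP <- : (U :&: x == x)%VS by rewrite eqEdim capvSr dx lt0n.
exact: capvSl.
Qed.

Lemma dimv_add_point (U x : V) : \dim x = 1 -> ~~ (x <= U)%VS ->
  \dim (U + x) = (\dim U).+1.
Proof.
move=> dx xU; have := dimv_sum_cap U x.
by rewrite capv_point_eq0 // dimv0 addn0 dx addn1.
Qed.

Lemma card_vspace_diff (m W : V) : (m <= W)%VS ->
  #|[set v in W | v \notin m]| = q ^ \dim W - q ^ \dim m.
Proof.
move=> mW; have -> : [set v in W | v \notin m] = [set v in W] :\: [set v in m].
  by apply/setP => v; rewrite !inE andbC.
rewrite cardsD (setIidPr _) ?cardsE ?card_vspace //.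
by apply/subsetP => v; rewrite !inE; apply: subvP.
Qed.

Lemma card_subspaces_between1 (m W : V) : (m <= W)%VS ->
  #|subspaces_between m W 1| = qint q (\dim W - \dim m).
Proof.
move=> mW; set B := subspaces_between m W 1; set A := [set v in W | v \notin m].
pose f v : pgsub F n := (m + <[v]>)%VS.
have dim_f v : v \notin m -> \dim (f v) = \dim m + 1.
  move=> vm; rewrite addn1 dimv_add_point -?memvE // dim_vline.
  by case: eqP vm => // ->; rewrite mem0v.
have f_in : {in A, forall v, f v \in B}.
  move=> v; rewrite !inE => /andP[vW vm].
  by rewrite dim_f // eqxx addvSl subv_add mW -memvE.
have fiber_card : {in B, forall U,
    #|[set v in A | f v == U]| = q ^ (\dim m + 1) - q ^ \dim m}.
  move=> U; rewrite inE => /and3P[/eqP dU mU UW].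
  rewrite -dU -card_vspace_diff //; apply: eq_card => v; rewrite !inE.
  apply/andP/andP => [[/andP[_ vm] /eqP <-]|[vU vm]]; first by rewrite memvE addvSr.
  split; first by rewrite (subvP UW).
  suff -> : f v = U :> V by [].
  by apply/eqP; rewrite eqEdim dim_f // dU leqnn andbT /f subv_add mU -memvE.
have exp_diff k : q ^ (\dim m + k) - q ^ \dim m = q ^ \dim m * q.-1 * qint q k.
  by rewrite expnD -mulnA /qint -predn_exp -subn1 mulnBr muln1.
have := card_fibers_eq f_in fiber_card.
rewrite card_vspace_diff // -(subnKC (dimvS mW)) !exp_diff addKn.
rewrite [qint q 1]/qint big_ord1 expn0 muln1 mulnC => /eqP.
have q_gt1 : 1 < q := finNzRing_gt1 F.
rewrite eqn_pmul2r ?muln_gt0 ?expn_gt0 -?subn1 ?subn_gt0 ?q_gt1 ?(ltnW q_gt1) //.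
by move=> /eqP.
Qed.

Lemma card_subspaces_between2 (m W : V) : (m <= W)%VS ->
  #|subspaces_between m W 2| * qint q 2 =
  qint q (\dim W - \dim m) * qint q (\dim W - \dim m - 1).
Proof.
move=> mW.
have lines_in_plane U : U \in subspaces_between m W 2 ->
    #|[set L in subspaces_between m W 1 | (L <= U)%VS]| = qint q 2.
  rewrite inE => /and3P[/eqP dU mU UW].
  rewrite -[2](addKn (\dim m)) -dU -card_subspaces_between1 //.
  apply: eq_card => L; rewrite !inE.
  apply/andP/and3P => [[/and3P[-> -> _] ->] // | [-> -> LU]].
  by rewrite (subv_trans LU UW).
have planes_on_line L : L \in subspaces_between m W 1 ->
    #|[set U in subspaces_between m W 2 | (L <= U)%VS]| =
    qint q (\dim W - \dim m - 1).
  rewrite inE => /and3P[/eqP dL mL LW].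
  rewrite -subnDA -dL -card_subspaces_between1 //.
  apply: eq_card => U; rewrite !inE dL -addnA.
  apply/andP/and3P => [[/and3P[-> _ ->] ->] // | [-> LU ->]].
  by rewrite (subv_trans mL LU).
have := sum_card_rel (subspaces_between m W 2) (subspaces_between m W 1)
  (fun U L => (L <= U)%VS).
rewrite (eq_bigr _ lines_in_plane) (eq_bigr _ planes_on_line) !sum_nat_const.
by rewrite card_subspaces_between1.
Qed.

Lemma dimv_cap_add_point (S J P : V) : \dim P = 1 -> ~~ (P <= S)%VS ->
  (P <= J)%VS -> (J <= S + P)%VS -> \dim (S :&: J) = \dim J - 1.
Proof.
move=> dP PS PJ JSP.
have SJ_eq : (S + J = S + P)%VS.
  by apply/eqP; rewrite eqEsubv subv_add addvSl JSP addvS.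
have := dimv_sum_cap S J; rewrite SJ_eq dimv_add_point // addSnnS.
by move=> /addnI <-; rewrite subn1.
Qed.

Lemma card_points_diff (S J : V) :
  #|subspaces_between 0 S 1 :\: subspaces_between 0 J 1| =
  qint q (\dim S) - qint q (\dim (S :&: J)).
Proof.
have points (U : V) : #|subspaces_between 0 U 1| = qint q (\dim U).
  by rewrite card_subspaces_between1 ?sub0v // dimv0 subn0.
rewrite cardsD -!points; congr (_ - _); apply: eq_card => a.
by rewrite !inE subv_cap sub0v /=; case: (_ == _).
Qed.

Lemma plane_through_point_cases (P J pi : V) : \dim P = 1 -> (P <= J)%VS ->
  (P <= pi)%VS -> \dim pi = 3 ->
  [\/ (pi <= J)%VS, \dim (pi :&: J) = 2 | (pi :&: J <= P)%VS].
Proof.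
move=> dP PJ Ppi dpi; have P_piJ : (P <= pi :&: J)%VS by rewrite subv_cap Ppi PJ.
have := dimvS P_piJ; have := dimvS (capvSl pi J); rewrite dP dpi.
case: (ltngtP (\dim (pi :&: J)) 2) => [lt2 _ _|gt2 le3 _|]; last by constructor 2.
- apply: Or33; have /eqP <- : (P == pi :&: J)%VS by rewrite eqEdim P_piJ dP.
  exact: subvv.
- apply: Or31; have /eqP <- : (pi :&: J == pi)%VS by rewrite eqEdim capvSl dpi.
  exact: capvSr.
Qed.

Lemma card_planes_meeting_in_line (P J : V) : \dim P = 1 -> (P <= J)%VS ->
  #|[set pi : pgsub F n | [&& \dim pi == 3, (P <= pi)%VS & \dim (pi :&: J) == 2]]|
  <= qint q (\dim J - 1) * (qint q (n - 2) - qint q (\dim J - 2)).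
Proof.
move=> dP PJ.
have dimf : \dim (fullv : V) = n by rewrite dimvf /dim /= mul1n.
have := card_subspaces_between1 PJ; rewrite dP => <-.
apply: (card_fibers_le (f := fun pi : pgsub F n => (pi :&: J)%VS : pgsub F n)).
  by move=> pi; rewrite !inE => /and3P[_ Ppi /eqP ->]; rewrite dP capvSr subv_cap Ppi PJ.
move=> m; rewrite inE dP => /and3P[/eqP dm Pm mJ].
have := card_subspaces_between1 (subvf m); have := card_subspaces_between1 mJ.
rewrite dimf dm => <- <-; rewrite -cardsDS; last first.
  by apply/subsetP => U; rewrite !inE subvf => /and3P[-> -> _].
apply/subset_leq_card/subsetP => pi; rewrite !inE dm.
case/andP=> /and3P[/eqP dpi Ppi /eqP dpiJ] /eqP <-.
rewrite dpi capvSl subvf /= andbT.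
by apply/negP => piJ; move: dpiJ; rewrite (elimT capv_idPl piJ) dpi.
Qed.

Section PlaneThroughPoint.
Variables (P pi : V).
Hypotheses (dimP : \dim P = 1) (P_pi : (P <= pi)%VS) (dim_pi : \dim pi = 3).

Lemma capv_neq0_notin (S J : V) : ~~ (P <= S)%VS -> (pi :&: J <= P)%VS ->
  (pi :&: S)%VS != 0%VS -> ~~ (pi :&: S <= J)%VS.
Proof.
move=> PS piJ; apply: contra => SJ.
rewrite -subv0 -(capv_point_eq0 dimP PS) subv_cap capvSr /=.
by apply: subv_trans piJ; rewrite subv_cap capvSl.
Qed.

Lemma dim_capv_transversal (S S' : V) : ~~ (P <= S)%VS -> ~~ (P <= S')%VS ->
  (pi :&: ((S + P) :&: (S' + P)) <= P)%VS ->
  (pi :&: S)%VS != 0%VS -> (pi :&: S')%VS != 0%VS -> \dim (pi :&: S) = 1.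
Proof.
move=> PS PS' piJ nzS nzS'.
apply/eqP; rewrite eqn_leq lt0n dimv_eq0 nzS andbT.
apply: contraR (capv_neq0_notin PS' piJ nzS'); rewrite -ltnNge => dim_gt1.
have pi_SP : (pi <= S + P)%VS.
  have <- : (pi :&: S + P = pi)%VS.
    apply/eqP; rewrite eqEdim subv_add capvSl P_pi dim_pi dimv_add_point //.
    by apply: contra PS => /subv_trans; apply; apply: capvSr.
  exact: addvS (capvSr _ _) (subvv P).
rewrite subv_cap (subv_trans (capvSl _ _) pi_SP).
exact: subv_trans (capvSr _ _) (addvSl _ _).
Qed.

Lemma plane_eq_transversal (S S' : V) : ~~ (P <= S)%VS -> ~~ (P <= S')%VS ->
  (pi :&: ((S + P) :&: (S' + P)) <= P)%VS ->
  (pi :&: S)%VS != 0%VS -> (pi :&: S')%VS != 0%VS ->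
  pi = (P + pi :&: S + pi :&: S')%VS.
Proof.
move=> PS PS' piJ nzS nzS'.
have piJ' : (pi :&: ((S' + P) :&: (S + P)) <= P)%VS.
  by rewrite [((S' + P) :&: _)%VS]capvC.
have dimPa : \dim (P + pi :&: S) = 2.
  rewrite dimv_add_point ?dimP ?(dim_capv_transversal PS PS') //.
  apply: contra nzS => aP; rewrite -subv0 -(capv_point_eq0 dimP PS).
  by rewrite subv_cap capvSr.
have b_notin : ~~ (pi :&: S' <= P + pi :&: S)%VS.
  apply: contra (capv_neq0_notin PS' piJ' nzS') => bPa.
  rewrite subv_cap (subv_trans (capvSr _ _) (addvSl _ _)) /=.
  by rewrite (subv_trans bPa) // subv_add addvSr (subv_trans (capvSr _ _) (addvSl _ _)).
apply/eqP; rewrite eq_sym eqEdim !subv_add P_pi !capvSl dim_pi.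
by rewrite dimv_add_point ?dimPa ?(dim_capv_transversal PS' PS).
Qed.

End PlaneThroughPoint.

Lemma card_transversal_planes (S1 S2 P : V) : \dim P = 1 ->
  ~~ (P <= S1)%VS -> ~~ (P <= S2)%VS ->
  #|[set pi : pgsub F n | [&& \dim pi == 3, (P <= pi)%VS, (pi :&: S1)%VS != 0%VS,
       (pi :&: S2)%VS != 0%VS & (pi :&: ((S1 + P) :&: (S2 + P)) <= P)%VS]]|
  <= #|subspaces_between 0 S1 1 :\: subspaces_between 0 ((S1 + P) :&: (S2 + P)) 1|
     * #|subspaces_between 0 S2 1 :\: subspaces_between 0 ((S1 + P) :&: (S2 + P)) 1|.
Proof.
move=> dP PS1 PS2; set J := ((S1 + P) :&: (S2 + P))%VS; set X := [set pi | _].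
have J' : ((S2 + P) :&: (S1 + P) = J)%VS by rewrite capvC.
pose g pi : pgsub F n * pgsub F n := ((pi :&: S1)%VS, (pi :&: S2)%VS).
have g_inj : {in X &, injective g}.
  move=> pi pi'; rewrite !inE => /and5P[/eqP dpi Ppi nz1 nz2 piJ].
  case/and5P=> /eqP dpi' Ppi' nz1' nz2' piJ' /pair_equal_spec[e1 e2].
  rewrite (plane_eq_transversal dP Ppi dpi PS1 PS2 piJ nz1 nz2).
  by rewrite (plane_eq_transversal dP Ppi' dpi' PS1 PS2 piJ' nz1' nz2') e1 e2.
rewrite -cardsX -(card_in_imset g_inj).
apply/subset_leq_card/subsetP => _ /imsetP[pi + ->].
rewrite !inE => /and5P[/eqP dpi Ppi nz1 nz2 piJ].
rewrite dimv0 !capvSr !sub0v (dim_capv_transversal dP Ppi dpi PS1 PS2 piJ nz1 nz2).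
have piJ21 : (pi :&: ((S2 + P) :&: (S1 + P)) <= P)%VS by rewrite J'.
rewrite (dim_capv_transversal dP Ppi dpi PS2 PS1 piJ21 nz2 nz1) /=.
by rewrite (capv_neq0_notin dP PS1 piJ nz1) (capv_neq0_notin dP PS2 piJ nz2).
Qed.

End Subspaces.

Lemma plane_count_arith (q d a b c : nat) : 1 < q -> 3 <= d <= 4 ->
  a * qint q 2 = qint q d.-1 * qint q d.-2 ->
  b <= qint q d.-1 * (qint q 5 - qint q d.-2) ->
  c <= (qint q 4 - qint q d.-1) * (qint q 4 - qint q d.-1) ->
  a + b + c <= 2 * q ^ 6 + 2 * q ^ 5 + 3 * q ^ 4 + 2 * q ^ 3 + 2 * q ^ 2 + q + 1.
Proof.
move=> q_gt1 d34; have [->|->] : d = 3 \/ d = 4 by lia.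
- rewrite /= mulnC => /eqP; rewrite eqn_pmul2l ?qint_gt0 // => /eqP ->.
  rewrite /qint !big_ord_recr !big_ord0 /= !expnS !expn0 !muln1; nia.
- move=> /= /eqP; rewrite eqn_pmul2r ?qint_gt0 // => /eqP ->.
  rewrite /qint !big_ord_recr !big_ord0 /= !expnS !expn0 !muln1; nia.
Qed.

Lemma dim_cap_joins (F : finFieldType) (S1 S2 P : {vspace 'rV[F]_7}) :
  \dim S1 = 4 -> \dim S2 = 4 -> \dim (S1 :&: S2) <= 2 ->
  \dim P = 1 -> ~~ (P <= S1)%VS -> ~~ (P <= S2)%VS ->
  3 <= \dim ((S1 + P) :&: (S2 + P)) <= 4.
Proof.
move=> dS1 dS2 dS12 dP PS1 PS2.
have := dimv_sum_cap (S1 + P) (S2 + P); have := dimv_sum_cap S1 S2.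
rewrite (dimv_add_point dP PS1) (dimv_add_point dP PS2) dS1 dS2.
have : \dim (S1 + S2) <= \dim (S1 + P + (S2 + P)) by rewrite dimvS // addvS ?addvSl.
have : \dim (S1 + P + (S2 + P)) <= 7.
  by rewrite (leq_trans (dimvS (subvf _))) // dimvf /dim /= mul1n.
lia.
Qed.

Unset Implicit Arguments. Set Strict Implicit.
Theorem lemma4p4 (F : finFieldType) (q : nat) (S1 S2 P : {vspace 'rV[F]_7}) :
  #|F| = q ->
  \dim S1 = 4 -> \dim S2 = 4 ->
  \dim (S1 :&: S2)%VS <= 2 ->
  \dim P = 1 -> ~~ (P <= S1)%VS -> ~~ (P <= S2)%VS ->
  #|planes_through_meeting P S1 S2| <=
    2 * q ^ 6 + 2 * q ^ 5 + 3 * q ^ 4 + 2 * q ^ 3 + 2 * q ^ 2 + q + 1.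
Proof.
move=> <- dS1 dS2 dS12 dP PS1 PS2.
have dimJ := dim_cap_joins dS1 dS2 dS12 dP PS1 PS2.
set J := ((S1 + P) :&: (S2 + P))%VS in dimJ *.
have PJ : (P <= J)%VS by rewrite subv_cap !addvSr.
have cardA := card_subspaces_between2 PJ; rewrite dP !subn1 in cardA.
have cardB := card_planes_meeting_in_line dP PJ; rewrite subn1 !subn2 in cardB.
have cardC := card_transversal_planes dP PS1 PS2.
rewrite !card_points_diff dS1 dS2 (dimv_cap_add_point dP PS1 PJ (capvSl _ _)) in cardC.
rewrite (dimv_cap_add_point dP PS2 PJ (capvSr _ _)) subn1 in cardC.
have cover : planes_through_meeting P S1 S2 \subset
    subspaces_between P J 2
    :|: [set pi : pgsub F 7 | [&& \dim pi == 3, (P <= pi)%VS & \dim (pi :&: J) == 2]]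
    :|: [set pi : pgsub F 7 | [&& \dim pi == 3, (P <= pi)%VS, (pi :&: S1)%VS != 0%VS,
       (pi :&: S2)%VS != 0%VS & (pi :&: J <= P)%VS]].
  apply/subsetP => pi; rewrite !inE => /and4P[/eqP dpi Ppi nz1 nz2].
  rewrite dpi dP Ppi nz1 nz2 /=.
  by case: (plane_through_point_cases dP PJ Ppi dpi) => [-> | -> | ->]; rewrite ?orbT.
apply: leq_trans (subset_leq_card cover) _.
apply: leq_trans (leq_card_setU _ _) _.
apply: leq_trans (leq_add (leq_card_setU _ _) (leqnn _)) _.
exact: plane_count_arith (finNzRing_gt1 F) dimJ cardA cardB cardC.
Qed.
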